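(* Let $1\to N\to G\xrightarrow{q}Q\to 1$ be a short exact sequence of groups, let $S$ be a generating set of $G$ and let $\mathcal{P}$ be a family of proper subgroups of $G$ such that every $P\in\mathcal{P}$ either contains $N$ or contains $S\setminus N$. Then $$\operatorname{CC}(G,\mathcal{P})\simeq\operatorname{CC}(Q,\overline{\mathcal{P}})\ast\operatorname{CC}(N,\mathcal{P}\cap N),$$ where $\overline{\mathcal{P}}=\{q(P): P\in\mathcal{P},\ N\subseteq P\}$ and $\mathcal{P}\cap N=\{P\cap N: P\in\mathcal{P},\ S\setminus N\subseteq P\}$.
   Context: For a group $G$ and a family $\mathcal{K}$ of subgroups, the coset complex $\operatorname{CC}(G,\mathcal{K})$ is the simplicial complex whose vertices are the cosets $gK$ ($g\in G$, $K\in\mathcal{K}$; cosets of different members of $\mathcal{K}$ are different vertices) and where a finite set of vertices spans a simplex iff the cosets have nonempty common intersection. Homotopy equivalence and the join $\ast$ refer to geometric realisations. *)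

From HB Require Import structures.
From Stdlib Require Import List.
From mathcomp Require Import all_boot all_order all_algebra.
From mathcomp Require Import boolp classical_sets cardinality reals Rstruct.
Set Implicit Arguments. Unset Strict Implicit. Unset Printing Implicit Defensive.
Import Order.TTheory GRing.Theory Num.Theory.

Local Open Scope classical_set_scope.

Definition is_subgroup (G : groupType) (H : set G) : Prop :=
  H 1%g /\ (forall x y, H x -> H y -> H (x * y^-1)%g).

Definition generates (G : groupType) (S : set G) : Prop :=
  forall H : set G, is_subgroup H -> S `<=` H -> H = setT.

Definition kernel (G Q : groupType) (q : G -> Q) : set G := [set g | q g = 1%g].

Definition lcoset (G : groupType) (g : G) (K : set G) : set G :=
  [set (g * k)%g | k in K].

Definition complex (V : Type) := set (set V).

Definition coset_complex (G : groupType) (H : set G) (F : set (set G))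
  : complex (set G) :=
  [set S | finite_set S /\ S !=set0 /\
     (forall C, S C -> exists h K, [/\ H h, F K & C = lcoset h K]) /\
     exists x, forall C, S C -> C x].

(* Simplicial join on the disjoint union of the vertex sets; its geometric
   realisation is (homeomorphic to) the join of the realisations. *)
Definition sjoin (V W : Type) (K : complex V) (L : complex W) : complex (V + W) :=
  [set S | (K (inl @^-1` S) \/ inl @^-1` S = set0) /\
           (L (inr @^-1` S) \/ inr @^-1` S = set0)].

Local Open Scope ring_scope.
Local Notation R := Rdefinitions.R.

Definition supp (V : Type) (x : V -> R) : set V := [set v | x v != 0].

(* points of |K|: barycentric coordinates, finitely supported on a simplex *)
Definition in_real (V : Type) (K : complex V) (x : V -> R) : Prop :=
  (forall v, 0 <= x v) /\ K (supp x) /\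
  exists s : list V, NoDup s /\ (forall v, supp x v <-> In v s) /\
     fold_right (fun v acc => x v + acc) 0 s = 1.

Definition cell (V : Type) (K : complex V) (sigma : set V) : set (V -> R) :=
  [set x | in_real K x /\ supp x `<=` sigma].

Definition weak_open (V : Type) (K : complex V) (O : set (V -> R)) : Prop :=
  forall sigma, K sigma -> forall x, cell K sigma x -> O x ->
    exists2 e : R, 0 < e & forall y, cell K sigma y ->
      (forall v, `|x v - y v| < e) -> O y.

Definition in_unit (t : R) : Prop := 0 <= t <= 1.

Definition unit_open (A : set R) : Prop :=
  forall t, in_unit t -> A t -> exists2 e : R, 0 < e &
    forall s, in_unit s -> `|t - s| < e -> A s.

Definition prod_open (V : Type) (K : complex V) (W : set (R * (V -> R))) : Prop :=
  forall t x, in_unit t -> in_real K x -> W (t, x) ->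
    exists A B, [/\ unit_open A, weak_open K B, A t, B x &
      forall s y, in_unit s -> in_real K y -> A s -> B y -> W (s, y)].

Definition real_map (V W : Type) (K : complex V) (L : complex W)
  (f : (V -> R) -> (W -> R)) : Prop :=
  (forall x, in_real K x -> in_real L (f x)) /\
  (forall O, weak_open L O -> weak_open K (f @^-1` O)).

Definition homotopic (V W : Type) (K : complex V) (L : complex W)
  (f g : (V -> R) -> (W -> R)) : Prop :=
  exists H : R -> (V -> R) -> (W -> R),
    [/\ forall t x, in_unit t -> in_real K x -> in_real L (H t x),
        forall O, weak_open L O -> prod_open K [set p | O (H p.1 p.2)],
        forall x, in_real K x -> H 0 x = f x &
        forall x, in_real K x -> H 1 x = g x].

Definition homotopy_equivalent (V W : Type) (K : complex V) (L : complex W) : Prop :=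
  exists (f : (V -> R) -> (W -> R)) (g : (W -> R) -> (V -> R)),
    [/\ real_map K L f, real_map L K g,
        homotopic K K (g \o f) id & homotopic L L (f \o g) id].

From HB Require Import structures.
From Stdlib Require Import List.
From mathcomp Require Import all_boot all_order all_algebra.
From mathcomp Require Import boolp classical_sets cardinality reals Rstruct.
Set Implicit Arguments. Unset Strict Implicit. Unset Printing Implicit Defensive.
Import GRing.Theory Num.Theory.
Local Open Scope classical_set_scope.

(* The two complexes are in fact isomorphic.  A coset gP of a subgroup P
   containing N is determined by its image q(gP), a coset of q(P) in Q; a coset
   gP of a subgroup P containing S \ N is determined by its trace gP ∩ N, a coset
   of P ∩ N in N, because P N = G.  No subgroup of the family is of both kinds
   (it would contain <S> = G), so sending each vertex to its image or its trace
   is a bijection onto the vertices of the join.  It preserves simplices in both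
   directions because cosets of the second kind through a common point x have
   common points in every fibre of q: the subgroup of the h with x h in all of
   them still contains S \ N, hence supplements N.  This gives a common point
   in N of their traces and, as cosets of the first kind are unions of fibres,
   a common point of all the cosets of a simplex of the join. *)

(** * Simplicial isomorphisms are homotopy equivalences *)

Local Open Scope ring_scope.
Local Notation R := Rdefinitions.R.

Definition is_vertex (V : Type) (K : complex V) (v : V) : Prop :=
  exists s, K s /\ s v.

(* The realisation of the vertex map inverse to psi, written with psi so that
   no inverse has to be constructed. *)
Definition transport (V W : Type) (L : complex W) (psi : W -> V) (x : V -> R)
    : W -> R :=
  fun w => if pselect (is_vertex L w) then x (psi w) else 0.

Lemma transport_vertex (V W : Type) (L : complex W) (psi : W -> V) x w :
  is_vertex L w -> transport L psi x w = x (psi w).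
Proof. by rewrite /transport; case: (pselect (is_vertex L w)). Qed.

Lemma transport_nonvertex (V W : Type) (L : complex W) (psi : W -> V) x w :
  ~ is_vertex L w -> transport L psi x w = 0.
Proof. by rewrite /transport; case: (pselect (is_vertex L w)). Qed.

Lemma in_real_supp_neq0 (V : Type) (K : complex V) x :
  in_real K x -> supp x !=set0.
Proof.
move=> [_ [_ [[|v s] [_ [Hs Hsum]]]]]; last by exists v; apply/Hs; left.
by move: Hsum => /= /eqP; rewrite eq_sym oner_eq0.
Qed.

Lemma homotopic_id (V : Type) (K : complex V) (f : (V -> R) -> (V -> R)) :
  (forall x, in_real K x -> f x = x) -> homotopic K K f id.
Proof.
move=> fid; exists (fun _ x => x); split => //; last by move=> x /fid.
move=> O Oo t x _ _ Ox; exists setT, O; split => // t' _ _.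
by exists 1.
Qed.

Section Transport.
Variables (V W : Type) (K : complex V) (L : complex W).
Variables (phi : V -> W) (psi : W -> V).
Hypothesis phi_simplicial : forall s, K s -> s !=set0 -> L (phi @` s).
Hypothesis phiK : forall v s, K s -> s v -> psi (phi v) = v.
Hypothesis psiK : forall w t, L t -> t w -> phi (psi w) = w.

Lemma transport_phi x v s : K s -> s v -> transport L psi x (phi v) = x v.
Proof.
move=> Ks sv; rewrite transport_vertex; first by rewrite (phiK Ks sv).
by exists (phi @` s); split; [apply: phi_simplicial => //; exists v | exists v].
Qed.

Lemma supp_transport x : in_real K x -> supp (transport L psi x) = phi @` supp x.
Proof.
move=> [_ [Kx _]]; apply/seteqP; split => w.
  case: (pselect (is_vertex L w)) => [[t [Lt tw]]|nw]; last first.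
    by rewrite /supp /= transport_nonvertex // eqxx.
  rewrite /supp /= transport_vertex; last by exists t.
  by exists (psi w); rewrite // (psiK Lt tw).
by move=> [v xv <-]; rewrite /supp /= (transport_phi _ Kx xv).
Qed.

Lemma in_real_transport x : in_real K x -> in_real L (transport L psi x).
Proof.
move=> xr; have [x_ge0 [Kx [s [s_uniq [Hs Hsum]]]]] := xr.
split.
  by move=> w; case: (pselect (is_vertex L w)) => h;
    [rewrite transport_vertex | rewrite transport_nonvertex].
split; first by rewrite supp_transport //; apply: phi_simplicial (in_real_supp_neq0 xr).
exists (map phi s); split.
  apply: NoDup_map_NoDup_ForallPairs => // a b /Hs xa /Hs xb e.
  by rewrite -(phiK Kx xa) -(phiK Kx xb) e.
split.
  move=> w; rewrite supp_transport // in_map_iff; split.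
    by move=> [v /Hs xv <-]; exists v.
  by move=> [v [<- /Hs xv]]; exists v.
rewrite -Hsum; have : forall v, In v s -> supp x v by move=> v /Hs.
elim: s {s_uniq Hs Hsum} => [//|v s IH] s_supp /=.
rewrite (transport_phi _ Kx (s_supp v (or_introl erefl))) IH // => u su.
by apply: s_supp; right.
Qed.

Lemma cell_transport sigma x : K sigma -> cell K sigma x ->
  cell L (phi @` sigma) (transport L psi x).
Proof.
move=> Ks [xr sx]; split; first exact: in_real_transport.
by rewrite supp_transport // => w [v /sx sv <-]; exists v.
Qed.

Lemma real_map_transport : real_map K L (transport L psi).
Proof.
split; first exact: in_real_transport.
move=> O Oo sigma Ks x cx Ox.
have sigma_neq0 : sigma !=set0.
  by have [v xv] := in_real_supp_neq0 cx.1; exists v; exact: cx.2.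
have [e e_gt0 He] := Oo _ (phi_simplicial Ks sigma_neq0) _ (cell_transport Ks cx) Ox.
exists e => // y cy xy_near; apply: He; first exact: cell_transport.
move=> w; case: (pselect (is_vertex L w)) => h; first by rewrite !transport_vertex.
by rewrite !transport_nonvertex // subrr normr0.
Qed.

Lemma transportK x : in_real K x -> transport K phi (transport L psi x) = x.
Proof.
move=> [_ [Kx _]]; apply/funext => v.
case: (pselect (is_vertex K v)) => [[s [Ks sv]]|nv].
  by rewrite transport_vertex; [exact: transport_phi Ks sv | exists s].
rewrite transport_nonvertex //; case: (eqVneq (x v) 0) => // xv.
by case: nv; exists (supp x).
Qed.

End Transport.

Lemma simplicial_iso_homotopy_equivalent (V W : Type) (K : complex V)
    (L : complex W) (phi : V -> W) (psi : W -> V) :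
  (forall s, K s -> s !=set0 -> L (phi @` s)) ->
  (forall t, L t -> t !=set0 -> K (psi @` t)) ->
  (forall v s, K s -> s v -> psi (phi v) = v) ->
  (forall w t, L t -> t w -> phi (psi w) = w) ->
  homotopy_equivalent K L.
Proof.
move=> phiS psiS phiK psiK; exists (transport L psi), (transport K phi); split.
- exact: real_map_transport phiS phiK psiK.
- exact: real_map_transport psiS psiK phiK.
- by apply: homotopic_id => x /(transportK phiS phiK).
- by apply: homotopic_id => x /(transportK psiS psiK).
Qed.

Lemma sjoin_inl (V W : Type) (K : complex V) (L : complex W) t :
  sjoin K L t -> forall v, t (inl v) -> K (inl @^-1` t).
Proof. by move=> [[//|t0] _] v; rewrite -[t (inl v)]/((inl @^-1` t) v) t0. Qed.

Lemma sjoin_inr (V W : Type) (K : complex V) (L : complex W) t :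
  sjoin K L t -> forall w, t (inr w) -> L (inr @^-1` t).
Proof. by move=> [_ [//|t0]] w; rewrite -[t (inr w)]/((inr @^-1` t) w) t0. Qed.

Local Close Scope ring_scope.

Local Open Scope group_scope.

Section Cosets.
Variable G : groupType.
Implicit Types (P : set G) (g x y : G).

Lemma subgroup1 P : is_subgroup P -> P 1.
Proof. by case. Qed.

Lemma subgroupV P x : is_subgroup P -> P x -> P x^-1.
Proof. by move=> [P1 PM] Px; have := PM _ _ P1 Px; rewrite mul1g. Qed.

Lemma subgroupM P x y : is_subgroup P -> P x -> P y -> P (x * y).
Proof. by move=> sP Px Py; have := sP.2 _ _ Px (subgroupV sP Py); rewrite invgK. Qed.

Lemma subgroupI P1 P2 : is_subgroup P1 -> is_subgroup P2 -> is_subgroup (P1 `&` P2).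
Proof.
move=> s1 s2; split; first by split; apply: subgroup1.
by move=> x y [? ?] [? ?]; split; [apply: s1.2 | apply: s2.2].
Qed.

Lemma lcosetP P g y : lcoset g P y <-> P (g^-1 * y).
Proof.
split; first by move=> [k Pk <-]; rewrite mulKg.
by move=> Py; exists (g^-1 * y); rewrite ?mulVKg.
Qed.

Lemma lcosetMP P g h : lcoset g P (g * h) <-> P h.
Proof. by rewrite lcosetP mulKg. Qed.

Lemma lcoset_refl P g : is_subgroup P -> lcoset g P g.
Proof. by move=> sP; apply/lcosetP; rewrite mulVg; exact: subgroup1. Qed.

Lemma lcoset_eq P g x : is_subgroup P -> lcoset g P x -> lcoset g P = lcoset x P.
Proof.
move=> sP /lcosetP Px; apply/seteqP; split => y /lcosetP Py; apply/lcosetP.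
  have -> : x^-1 * y = (g^-1 * x)^-1 * (g^-1 * y) by rewrite invgM invgK -mulgA mulVKg.
  by apply: subgroupM => //; apply: subgroupV.
have -> : g^-1 * y = (g^-1 * x) * (x^-1 * y) by rewrite mulgA mulgK.
exact: subgroupM.
Qed.

Lemma lcoset_inj P1 P2 g h : is_subgroup P1 -> is_subgroup P2 ->
  lcoset g P1 = lcoset h P2 -> P1 = P2.
Proof.
move=> s1 s2 e.
have {}e : lcoset g P1 = lcoset g P2.
  by rewrite e; apply: lcoset_eq => //; rewrite -e; apply: lcoset_refl.
apply/seteqP; split => y Py.
  by have /lcosetMP : lcoset g P2 (g * y) by rewrite -e; apply/lcosetMP.
by have /lcosetMP : lcoset g P1 (g * y) by rewrite e; apply/lcosetMP.
Qed.

Lemma coset_complex_or_set0 (H : set G) (F : set (set G)) A :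
  finite_set A ->
  (forall C, A C -> exists h K, [/\ H h, F K & C = lcoset h K]) ->
  (A !=set0 -> exists x, forall C, A C -> C x) ->
  coset_complex H F A \/ A = set0.
Proof.
move=> finA cosA ptA; case: (pselect (A !=set0)) => [A0|nA]; last first.
  by right; apply/seteqP; split => // C AC; apply: nA; exists C.
by left; split; [|split; [|split; [|exact: ptA]]].
Qed.

End Cosets.

Section Extension.
Variables (G Q : groupType) (q : G -> Q).
Hypothesis qM : forall x y : G, q (x * y) = q x * q y.

Local Notation N := (kernel q).

Lemma morph1 : q 1 = 1.
Proof. by apply: (mulIg (q 1)); rewrite -qM !mul1g. Qed.

Lemma morphV x : q x^-1 = (q x)^-1.
Proof. by apply/esym/mulg1_eq; rewrite -qM mulgV morph1. Qed.

Lemma kernel_subgroup : is_subgroup N.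
Proof.
split; first exact: morph1.
by move=> x y; rewrite /kernel /= qM morphV => -> ->; rewrite invg1 mulg1.
Qed.

Lemma kernelM x y : N x -> N y -> N (x * y).
Proof. by rewrite /kernel /= qM => -> ->; rewrite mulg1. Qed.

Lemma image_lcoset g (P : set G) : q @` lcoset g P = lcoset (q g) (q @` P).
Proof.
apply/seteqP; split => z.
  by move=> [_ [k Pk <-] <-]; exists (q k); [exists k | rewrite qM].
by move=> [_ [k Pk <-] <-]; exists (g * k); [exists k | rewrite qM].
Qed.

Lemma preimage_image_lcoset g (P : set G) : is_subgroup P -> N `<=` P ->
  q @^-1` (q @` lcoset g P) = lcoset g P.
Proof.
move=> sP NP; apply/seteqP; split => [y [c Cc qcy]|y Cy]; last by exists y.
rewrite (lcoset_eq sP Cc); apply/lcosetP; apply: NP.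
by rewrite /kernel /= qM morphV qcy mulVg.
Qed.

Lemma lcoset_meet_kernel (P : set G) h : N h -> lcoset h P `&` N = lcoset h (P `&` N).
Proof.
move=> Nh; apply/seteqP; split => y.
  move=> [[k Pk <-] Nhk]; exists k => //; split => //.
  by move: Nhk; rewrite /kernel /= qM Nh mul1g.
by move=> [k [Pk Nk] <-]; split; [exists k | exact: kernelM].
Qed.

Variable S : set G.
Hypothesis genS : generates S.

Lemma subgroup_kernel_setT (P : set G) : is_subgroup P -> N `<=` P ->
  S `\` N `<=` P -> P = setT.
Proof.
move=> sP NP SP; apply: genS => // s Ss.
by case: (pselect (N s)) => Ns; [apply: NP | apply: SP].
Qed.

Lemma subgroup_mul_kernel (H : set G) : is_subgroup H -> S `\` N `<=` H ->
  forall u, exists h n, [/\ H h, N n & u = h * n].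
Proof.
move=> sH SH.
pose HN := [set u | exists h n, [/\ H h, N n & u = h * n]].
suff HNT : HN = setT by move=> u; have : HN u by rewrite HNT.
apply: genS.
  split; first by exists 1, 1; rewrite mulg1; split=> //; [exact: subgroup1 | exact: morph1].
  move=> _ _ [h1 [n1 [H1 N1 ->]]] [h2 [n2 [H2 N2 ->]]].
  exists (h1 * h2^-1), (h2 * (n1 * n2^-1) * h2^-1); split.
  - exact: sH.2.
  - by rewrite /kernel /= !qM !morphV N1 N2 invg1 !mulg1 mulgV.
  - by rewrite !invgM !mulgA mulgVK.
move=> s Ss; case: (pselect (N s)) => Ns.
  by exists 1, s; rewrite mul1g; split => //; exact: subgroup1.
by exists s, 1; rewrite mulg1; split => //; [exact: SH | exact: morph1].
Qed.

Lemma subgroup_sub_from_kernel (P1 P2 : set G) : is_subgroup P1 -> is_subgroup P2 ->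
  S `\` N `<=` P1 -> S `\` N `<=` P2 -> P1 `&` N `<=` P2 -> P1 `<=` P2.
Proof.
move=> s1 s2 S1 S2 I12 x P1x.
have [h [n [[P1h P2h] Nn ex]]] :=
  subgroup_mul_kernel (subgroupI s1 s2) (fun u Su => conj (S1 u Su) (S2 u Su)) x.
rewrite ex in P1x *; apply: (subgroupM s2 P2h); apply: I12; split => //.
by rewrite -(mulKg h n); apply: (subgroupM s1 (subgroupV s1 P1h)).
Qed.

(* The subgroup of the h with x h in every coset of I contains S \ N, hence
   supplements N. *)
Lemma lcosets_meet_fibre (I : set (set G)) x :
  (forall C, I C -> exists P, [/\ is_subgroup P, S `\` N `<=` P & C = lcoset x P]) ->
  forall y, exists z, (forall C, I C -> C z) /\ q z = q y.
Proof.
move=> HI y; pose H := [set h | forall C, I C -> C (x * h)].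
have sH : is_subgroup H.
  split => [C IC|a b Ha Hb C IC]; have [P [sP _ eC]] := HI C IC.
    by rewrite eC mulg1; exact: lcoset_refl.
  by move: (Ha C IC) (Hb C IC); rewrite eC !lcosetMP; exact: sP.2.
have SH : S `\` N `<=` H.
  by move=> u Su C IC; have [P [sP SP ->]] := HI C IC; rewrite lcosetMP; exact: SP.
have [h [n [Hh Nn E]]] := subgroup_mul_kernel sH SH (x^-1 * y).
exists (x * h); split; first exact: Hh.
by rewrite -[y](mulVKg x) E mulgA (qM _ n) Nn mulg1.
Qed.

(** * The vertex bijection *)

Hypothesis q_surj : forall y : Q, exists x : G, q x = y.
Variable PP : set (set G).
Hypothesis PP_proper : forall P, PP P -> is_subgroup P /\ P <> setT.
Hypothesis PP_cond : forall P, PP P -> N `<=` P \/ S `\` N `<=` P.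

Definition PPN := [set P | PP P /\ N `<=` P].
Definition PPS := [set P | PP P /\ S `\` N `<=` P].

Definition coset_of (F : set (set G)) (C : set G) : Prop :=
  exists g P, F P /\ C = lcoset g P.

Lemma PP_subgroup P : PP P -> is_subgroup P.
Proof. by move/PP_proper => []. Qed.

Lemma coset_of_PPN_PPS C : coset_of PPN C -> coset_of PPS C -> False.
Proof.
move=> [g1 [P1 [[PP1 NP1] e1]]] [g2 [P2 [[PP2 SP2] e2]]].
have e : P1 = P2.
  by apply: (lcoset_inj (g := g1) (h := g2) (PP_subgroup PP1) (PP_subgroup PP2)); rewrite -e1 -e2.
apply: (PP_proper PP1).2; apply: subgroup_kernel_setT (PP_subgroup PP1) NP1 _.
by rewrite e.
Qed.

Lemma coset_of_PPN_preimage C : coset_of PPN C -> q @^-1` (q @` C) = C.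
Proof. by move=> [g [P [[PPP NP] ->]]]; exact: preimage_image_lcoset (PP_subgroup PPP) NP. Qed.

Lemma coset_of_PPS_kernel C : coset_of PPS C -> exists m P,
  [/\ PPS P, N m, C = lcoset m P & C `&` N = lcoset m (P `&` N)].
Proof.
move=> [g [P [[PPP SP] eC]]]; have sP := PP_subgroup PPP.
have [h [n [Ph Nn E]]] := subgroup_mul_kernel sP SP g^-1.
have Nm : N (g * h).
  by rewrite /kernel /= qM -[q h]mulg1 -Nn -qM -E morphV mulgV.
have eC' : C = lcoset (g * h) P.
  by rewrite eC; apply: lcoset_eq => //; apply/lcosetMP.
by exists (g * h), P; rewrite -lcoset_meet_kernel // -eC'.
Qed.

Lemma coset_of_PPS_meet_kernel_inj C1 C2 : coset_of PPS C1 -> coset_of PPS C2 ->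
  C1 `&` N = C2 `&` N -> C1 = C2.
Proof.
move=> /coset_of_PPS_kernel [m [P1 [[PP1 S1] N1 e1 f1]]].
move=> /coset_of_PPS_kernel [m2 [P2 [[PP2 S2] _ e2 _]]] e.
have s1 := PP_subgroup PP1; have s2 := PP_subgroup PP2.
have [C2m _] : (C2 `&` N) m.
  by rewrite -e f1; exact: lcoset_refl (subgroupI s1 kernel_subgroup).
have {}e2 : C2 = lcoset m P2 by rewrite e2; apply: lcoset_eq s2 _; rewrite -e2.
have meet_sub A B (CA CB : set G) : is_subgroup A -> is_subgroup B ->
    CA = lcoset m A -> CB = lcoset m B -> CA `&` N = CB `&` N -> A `&` N `<=` B.
  move=> sA sB -> -> eAB k [Ak Nk].
  have : (lcoset m A `&` N) (m * k) by split; [exact/lcosetMP | exact: kernelM].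
  by rewrite eAB => -[/lcosetMP].
suff eP : P1 = P2 by rewrite e1 e2 eP.
apply/seteqP; split; apply: subgroup_sub_from_kernel => //.
  exact: (meet_sub _ _ _ _ s1 s2 e1 e2 e).
exact: (meet_sub _ _ _ _ s2 s1 e2 e1 (esym e)).
Qed.

Local Notation KG := (coset_complex setT PP).
Local Notation KQ := (coset_complex setT [set Pb | exists2 P, PPN P & Pb = q @` P]).
Local Notation KN := (coset_complex N [set PN | exists2 P, PPS P & PN = P `&` N]).

Definition to_join (C : set G) : set Q + set G :=
  if pselect (coset_of PPN C) then inl (q @` C) else inr (C `&` N).

(* On a vertex E of the second factor, the coset with trace E, unique by
   [coset_of_PPS_meet_kernel_inj]; the default [set0] is never used. *)
Definition of_join (w : set Q + set G) : set G :=
  match w with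
  | inl D => q @^-1` D
  | inr E => xget set0 [set C | coset_of PPS C /\ C `&` N = E]
  end.

Lemma of_join_inr E : (exists C, coset_of PPS C /\ C `&` N = E) ->
  coset_of PPS (of_join (inr E)) /\ of_join (inr E) `&` N = E.
Proof. exact: xgetPex. Qed.

Lemma to_join_PPN C : coset_of PPN C -> to_join C = inl (q @` C).
Proof. by rewrite /to_join; case: pselect. Qed.

Lemma to_join_PPS C : coset_of PPS C -> to_join C = inr (C `&` N).
Proof.
move=> CS; rewrite /to_join; case: pselect => // CN.
by case: (coset_of_PPN_PPS CN CS).
Qed.

Lemma to_join_inl C D : to_join C = inl D -> coset_of PPN C /\ D = q @` C.
Proof. by rewrite /to_join; case: pselect => // CN [<-]. Qed.

Lemma to_join_inr C E : to_join C = inr E -> E = C `&` N.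
Proof. by rewrite /to_join; case: pselect => // _ [<-]. Qed.

Lemma KG_vertex s C : KG s -> s C -> coset_of PPN C \/ coset_of PPS C.
Proof.
move=> [_ [_ [cos _]]] /cos [g [P [_ PPP ->]]].
by case: (PP_cond PPP) => h; [left | right]; exists g, P.
Qed.

Lemma KG_to_join_inr s C E : KG s -> s C -> to_join C = inr E ->
  coset_of PPS C /\ E = C `&` N.
Proof.
move=> Ks sC; rewrite /to_join; case: pselect => // CN [<-].
by case: (KG_vertex Ks sC).
Qed.

Lemma KQ_vertex A D : KQ A -> A D ->
  exists g P, PPN P /\ D = q @` lcoset g P.
Proof.
move=> [_ [_ [cos _]]] /cos [y [_ [_ [P PNP ->] ->]]].
by have [g <-] := q_surj y; exists g, P; rewrite image_lcoset.
Qed.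

Lemma KN_vertex B E : KN B -> B E -> exists C, coset_of PPS C /\ C `&` N = E.
Proof.
move=> [_ [_ [cos _]]] /cos [h [_ [Nh [P PSP ->] ->]]].
by exists (lcoset h P); split; [exists h, P | exact: lcoset_meet_kernel].
Qed.

Lemma of_joinK C s : KG s -> s C -> of_join (to_join C) = C.
Proof.
move=> Ks sC; case: (KG_vertex Ks sC) => hC.
  by rewrite to_join_PPN //= coset_of_PPN_preimage.
rewrite to_join_PPS //; have [hC' e] := of_join_inr (ex_intro _ C (conj hC erefl)).
exact: coset_of_PPS_meet_kernel_inj.
Qed.

Lemma to_joinK w t : sjoin KQ KN t -> t w -> to_join (of_join w) = w.
Proof.
move=> jt; case: w => [D|E] tw.
  have [g [P [[PPP NP] ->]]] := KQ_vertex (sjoin_inl jt tw) tw.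
  rewrite /= (preimage_image_lcoset _ (PP_subgroup PPP) NP) to_join_PPN //.
  by exists g, P.
have [CS e] := of_join_inr (KN_vertex (sjoin_inr jt tw) tw).
by rewrite to_join_PPS // e.
Qed.


Lemma to_join_simplicial s : KG s -> s !=set0 -> sjoin KQ KN (to_join @` s).
Proof.
move=> Ks _; have [fins [_ [_ [x sx]]]] := Ks.
split; apply: coset_complex_or_set0.
- apply: sub_finite_set (finite_image (fun C => q @` C) fins).
  by move=> D [C sC /to_join_inl [_ ->]]; exists C.
- move=> D [C sC /to_join_inl [[g [P [PNP ->]]] ->]].
  by exists (q g), (q @` P); rewrite image_lcoset; split => //; exists P.
- by move=> _; exists (q x) => D [C sC /to_join_inl [_ ->]]; exists x; [exact: sx|].
- apply: sub_finite_set (finite_image (fun C => C `&` N) fins).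
  by move=> E [C sC /to_join_inr ->]; exists C.
- move=> E [C sC /(KG_to_join_inr Ks sC) [/coset_of_PPS_kernel CS ->]].
  have [m [P [PSP Nm _ ->]]] := CS.
  by exists m, (P `&` N); split => //; exists P.
- move=> _.
  have SxP : forall C, [set C | s C /\ coset_of PPS C] C ->
      exists P, [/\ is_subgroup P, S `\` N `<=` P & C = lcoset x P].
    move=> C [sC [g [P [[PPP SP] eC]]]]; have sP := PP_subgroup PPP.
    by exists P; split => //; rewrite eC; apply: lcoset_eq => //; rewrite -eC; exact: sx.
  have [z [Hz qz]] := lcosets_meet_fibre SxP 1.
  exists z => E [C sC /(KG_to_join_inr Ks sC) [CS ->]].
  by split; [exact: Hz | rewrite /kernel /= qz morph1].
Qed.

Lemma of_join_simplicial t : sjoin KQ KN t -> t !=set0 -> KG (of_join @` t).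
Proof.
move=> jt [w0 tw0]; pose A := inl @^-1` t; pose B := inr @^-1` t.
have finA : finite_set A by case: jt => [[[]|A0] _] //; rewrite /A A0.
have finB : finite_set B by case: jt => [_ [[]|B0]] //; rewrite /B B0.
have [x0 Ax0] : exists x0, forall D, A D -> D (q x0).
  case: jt => [[[_ [_ [_ [y0 Ay0]]]]|A0] _]; last by exists 1; rewrite /A A0.
  by have [x0 qx0] := q_surj y0; exists x0; rewrite qx0.
have [m [Nm Bm]] : exists m, N m /\ forall E, B E -> E m.
  case: jt => [_ [KB|B0]]; last by exists 1; split; [exact: morph1 | rewrite /B B0].
  have [_ [[E0 BE0] [_ [m Bm]]]] := KB; exists m; split => //.
  by have [C [_ eE0]] := KN_vertex KB BE0; move: (Bm _ BE0); rewrite -eE0 => -[].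
have SmP : forall C, [set C | exists2 E, B E & C = of_join (inr E)] C ->
    exists P, [/\ is_subgroup P, S `\` N `<=` P & C = lcoset m P].
  move=> _ [E BE ->].
  have [[g [P [[PPP SP] eC]]] eE] := of_join_inr (KN_vertex (sjoin_inr jt BE) BE).
  have sP := PP_subgroup PPP.
  exists P; split => //; rewrite eC; apply: lcoset_eq sP _; rewrite -eC.
  by have [] : (of_join (inr E) `&` N) m by rewrite eE; exact: Bm.
have [z [Bz qz]] := lcosets_meet_fibre SmP x0.
split.
  apply: finite_image; apply: (sub_finite_set (B := inl @` A `|` inr @` B)).
    by case => [D|E] tw; [left; exists D | right; exists E].
  by rewrite finite_setU; split; apply: finite_image.
split; first by exists (of_join w0), w0.
split.
  move=> C [[D|E] tw <-].
    have [g [P [[PPP NP] ->]]] := KQ_vertex (sjoin_inl jt tw) tw.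
    by exists g, P; rewrite /= (preimage_image_lcoset _ (PP_subgroup PPP) NP).
  have [[g [P [[PPP _] ->]]] _] := of_join_inr (KN_vertex (sjoin_inr jt tw) tw).
  by exists g, P.
exists z => C [[D|E] tw <-]; first by rewrite /= qz; exact: Ax0.
by apply: Bz; exists E.
Qed.

Lemma coset_complex_join_homotopy_equivalent :
  homotopy_equivalent KG (sjoin KQ KN).
Proof.
exact: simplicial_iso_homotopy_equivalent
  to_join_simplicial of_join_simplicial of_joinK to_joinK.
Qed.

End Extension.


Theorem corollary3p20 (G Q : groupType) (q : G -> Q)
  (qM : forall x y : G, q (x * y)%g = (q x * q y)%g)
  (q_surj : forall y : Q, exists x : G, q x = y)
  (S : set G) (genS : generates S)
  (PP : set (set G))
  (PP_proper : forall P, PP P -> is_subgroup P /\ P <> setT)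
  (PP_cond : forall P, PP P -> kernel q `<=` P \/ S `\` kernel q `<=` P) :
  homotopy_equivalent
    (coset_complex setT PP)
    (sjoin
       (coset_complex setT
          [set Pb | exists2 P, PP P /\ kernel q `<=` P & Pb = q @` P])
       (coset_complex (kernel q)
          [set PN | exists2 P, PP P /\ S `\` kernel q `<=` P & PN = P `&` kernel q])).
Proof. exact: (coset_complex_join_homotopy_equivalent qM genS q_surj PP_proper PP_cond). Qed.
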